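(* Let $\Bbbk$ be a field, $n\ge2$, $q\in\Bbbk$ a primitive $n$-th root of unity, $T_n(q)$ the Taft algebra and $A$ a unital associative $\Bbbk$-algebra. Let $\cdot:T_n(q)\otimes A\to A$ be a linear map with $1\cdot1_A=1_A$ and $g^i\cdot1_A=0$ for all $1\le i<n$. Then $\cdot$ is a partial action of $T_n(q)$ on $A$ if and only if $(x\cdot1_A)^n\in Z(A)$ and $$g^{n-i}x^j\cdot a=(-1)^iq^{\frac{i(i+1)}{2}}\binom{j}{i}_q(x\cdot1_A)^{j-i}a(x\cdot1_A)^i$$ for all $a\in A$ and $0\le i,j<n$.
   Context: The Taft algebra $T_n(q)$ is the Hopf algebra generated by $g,x$ with relations $g^n=1$, $x^n=0$, $xg=qgx$ (so $g^n=1$), basis $\{g^ix^j:0\le i,j<n\}$, $g$ group-like, $\Delta(x)=x\otimes1+g\otimes x$, $\varepsilon(x)=0$. $Z(A)$ is the center of $A$. A partial action of a bialgebra $H$ on $A$ is a linear map $\cdot:H\otimes A\to A$ with $1_H\cdot a=a$, $h\cdot(ab)=(h_1\cdot a)(h_2\cdot b)$, $h\cdot(k\cdot a)=(h_1\cdot1_A)(h_2k\cdot a)$. $q$-binomials: $\binom{0}{0}_p=1$, $\binom{N}{m}_p=0$ if $m>N$ or $m<0$, and $\binom{N}{m}_p=\binom{N-1}{m-1}_p+p^m\binom{N-1}{m}_p$ for $N\ge1$, $0\le m\le N$. *)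

From HB Require Import structures.
From mathcomp Require Import all_boot all_order all_algebra.
Set Implicit Arguments. Unset Strict Implicit. Unset Printing Implicit Defensive.
Import GRing.Theory.
Local Open Scope ring_scope.

Fixpoint qbin {K : nzRingType} (p : K) (N m : nat) : K :=
  match N with
  | 0 => if m == 0%N then 1 else 0
  | N'.+1 => match m with
             | 0 => qbin p N' 0
             | m'.+1 => qbin p N' m' + p ^+ m * qbin p N' m
             end
  end.

(* The Taft algebra T_n(q) as a vector space: an element is its matrix of
   coordinates in the basis {g^i x^j : 0 <= i,j < n}, entry (i,j) being the
   coefficient of g^i x^j. *)
Definition taft (K : nzRingType) (n : nat) := 'M[K]_n.

(* tb n i j = the basis element g^i x^j, for arbitrary naturals i j:
   g^i = g^(i mod n) since g^n = 1, and x^j = 0 for j >= n. *)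
Definition tb {K : nzRingType} (n i j : nat) : taft K n :=
  \matrix_(r < n, c < n) (((r : nat) == (i %% n)%N) && ((c : nat) == j))%:R.

(* Multiplication of T_n(q): (g^i x^j)(g^k x^l) = q^(jk) g^(i+k) x^(j+l),
   since x g = q g x; extended bilinearly. *)
Definition tmul {K : nzRingType} (n : nat) (q : K) (h h' : taft K n) : taft K n :=
  \sum_(r < n) \sum_(c < n) \sum_(r' < n) \sum_(c' < n)
     (h r c * h' r' c' * q ^+ (c * r')%N) *: tb n (r + r')%N (c + c')%N.

(* Sweedler sum  sum F(h_(1), h_(2))  for a bilinear F : T x T -> A, where the
   coproduct of T_n(q) (Delta g = g (x) g, Delta x = x (x) 1 + g (x) x) is
   Delta(g^i x^j) = sum_(k=0..j) binom(j,k)_q g^(i+k) x^(j-k) (x) g^i x^k. *)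
Definition sweedler {K : comNzRingType} (n : nat) (q : K) (A : lmodType K)
    (F : taft K n -> taft K n -> A) (h : taft K n) : A :=
  \sum_(r < n) \sum_(c < n)
     h r c *: \sum_(k < c.+1) qbin q c k *: F (tb n (r + k)%N (c - k)%N) (tb n r k).

Definition is_partial_action {K : fieldType} (n : nat) (q : K) (A : algType K)
    (act : taft K n -> A -> A) : Prop :=
  [/\ forall a : A, act (tb n 0 0) a = a,
      forall (h : taft K n) (a b : A),
        act h (a * b) = sweedler q (fun h1 h2 => act h1 a * act h2 b) h
    & forall (h k : taft K n) (a : A),
        act h (act k a) = sweedler q (fun h1 h2 => act h1 1 * act (tmul q h2 k) a) h].

Definition in_center {K : fieldType} (A : algType K) (c : A) : Prop :=
  forall b : A, c * b = b * c.

From HB Require Import structures.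
From mathcomp Require Import all_boot all_order all_algebra.
From mathcomp Require Import ring.
Set Implicit Arguments. Unset Strict Implicit. Unset Printing Implicit Defensive.
Import GRing.Theory.
Local Open Scope ring_scope.

(* Write y = x . 1_A. Multiplicativity of the action of g^m gives g^m . a = a
   when n | m and 0 otherwise, and the third axiom applied to g^(n-1) x and
   g^(m+1) x^j yields the recursion
     g^m x^(j+1) . a = q^(-m) (y (g^m x^j . a) - (g^(m+1) x^j . a) y).
   So g^m x^j . a is the j-th iterate, evaluated at m, of the twisted
   difference operator [qdiff] applied to the sequence m |-> g^m . a. These
   iterates are given by the closed formula of the theorem for j < n, and the
   n-th one is y^n a - a y^n at multiples of n: the top coefficient
   (-1)^(n-1) q^(n(n-1)/2) is 1 and the q-binomials binom(n, i), 0 < i < n,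
   vanish. Hence x^n = 0 forces y^n to be central. Conversely, [qdiff]
   satisfies a q-Leibniz rule whose coefficients are those of the coproduct of
   g^i x^j, and this turns the representation of the action by iterates of
   [qdiff] into the two remaining partial-action axioms. *)

Section QBinomial.
Variables (K : nzRingType) (q : K).

Lemma qbin0 j : qbin q j 0 = 1.
Proof. by elim: j. Qed.

Lemma qbin_small j i : (j < i)%N -> qbin q j i = 0.
Proof. by elim: j i => [|j IHj] [|i] //= lt_ji; rewrite !IHj ?mulr0 ?addr0 // ltnW. Qed.

Lemma qbinSS j i : qbin q j.+1 i.+1 = qbin q j i + q ^+ i.+1 * qbin q j i.+1.
Proof. by []. Qed.

Lemma qbinn j : qbin q j j = 1.
Proof. by elim: j => //= j ->; rewrite qbin_small // mulr0 addr0. Qed.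

End QBinomial.

Lemma qbin_prod (K : comNzRingType) (q : K) N k :
  qbin q (N + k) k * \prod_(t < k) (1 - q ^+ t.+1) =
  \prod_(t < k) (1 - q ^+ (N + t.+1)).
Proof.
elim: N k => [|N IHN] k; first by rewrite add0n qbinn mul1r.
elim: k => [|k IHk]; first by rewrite addn0 qbin0 !big_ord0 mulr1.
rewrite addnS qbinSS mulrDl [X in qbin _ _ k * X]big_ord_recr mulrA IHk.
have := IHN k.+1; rewrite addnS -addSn -mulrA => ->.
set P := \prod_(t < k) (1 - q ^+ (N.+1 + t.+1)).
have -> : \prod_(t < k.+1) (1 - q ^+ (N + t.+1)) = (1 - q ^+ N.+1) * P.
  by rewrite big_ord_recl addn1; congr (_ * _); apply: eq_bigr => t _; rewrite addSnnS.
rewrite big_ord_recr /= -/P !exprD !exprS.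
by clearbody P; move: (q ^+ N) (q ^+ k) => a b; ring.
Qed.

Lemma qbin_prim_root_eq0 (K : idomainType) (q : K) n i :
  n.-primitive_root q -> (0 < i < n)%N -> qbin q n i = 0.
Proof.
move=> q_prim /andP[i_gt0 lt_in].
have := qbin_prod q (n - i) i.
rewrite subnK; last exact: ltnW.
case: i => [|i] in i_gt0 lt_in *; first by [].
rewrite [RHS]big_ord_recr /= subnK; last exact: ltnW.
rewrite (prim_expr_order q_prim) subrr mulr0.
move/eqP; rewrite mulf_eq0 => /orP[/eqP // | /prodf_eq0[t _]].
rewrite subr_eq0 eq_sym -(expr0 q) (eq_prim_root_expr q_prim) mod0n modn_small //.
exact: leq_ltn_trans (ltn_ord t) lt_in.
Qed.

Lemma prim_root_sign (K : fieldType) (q : K) n :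
  n.-primitive_root q -> (-1) ^+ n * q ^+ 'C(n, 2) = -1.
Proof.
move=> q_prim.
have := congr1 (fun p : {poly K} => p.[0]) (factor_Xn_sub_1 q_prim).
rewrite horner_prod hornerD hornerN hornerXn hornerC expr0n.
rewrite eqn0Ngt (prim_order_gt0 q_prim) sub0r big_mkord.
under eq_bigr => i _ do rewrite hornerXsubC sub0r.
by rewrite prodrN card_ord prodrXr -bin2_sum big_mkord.
Qed.

Lemma qbin_sumS (K : comNzRingType) (q : K) (V : lmodType K) j (T : nat -> V) :
  \sum_(k < j.+2) qbin q j.+1 k *: T k =
  \sum_(k < j.+1) (q ^+ k * qbin q j k) *: T k + \sum_(k < j.+1) qbin q j k *: T k.+1.
Proof.
rewrite big_ord_recl [in RHS]big_ord_recl /= qbin0 expr0 mul1r /bump /=.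
under eq_bigr => k _ do rewrite add0n add1n scalerDl.
rewrite big_split /= addrA addrAC; congr (_ + _ + _).
rewrite big_ord_recr /= qbin_small // mulr0 scale0r addr0.
by apply: eq_bigr => k _; rewrite add1n.
Qed.

Definition taft_coef (K : nzRingType) (q : K) (i j : nat) : K :=
  (-1) ^+ i * q ^+ ((i * i.+1)./2) * qbin q j i.

Lemma half_mulnS_bin2 i : ((i * i.+1)./2 = 'C(i.+1, 2))%N.
Proof. by rewrite bin2 mulnC. Qed.

Section TaftCoef.
Variables (K : comNzRingType) (q : K).

Lemma taft_coef0 j : taft_coef q 0 j = 1.
Proof. by rewrite /taft_coef qbin0 !mulr1. Qed.

Lemma taft_coef_small i j : (j < i)%N -> taft_coef q i j = 0.
Proof. by move=> lt_ji; rewrite /taft_coef qbin_small // mulr0. Qed.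

Lemma taft_coefSS i j :
  q ^+ i.+1 * (taft_coef q i.+1 j - taft_coef q i j) = taft_coef q i.+1 j.+1.
Proof.
rewrite /taft_coef qbinSS !half_mulnS_bin2 binS bin1 exprD !exprS.
by move: (qbin q j i) (qbin q j i.+1) => b b'; ring.
Qed.

End TaftCoef.

Lemma taft_coef_top (K : fieldType) (q : K) n :
  n.-primitive_root q -> taft_coef q n.-1 n.-1 = 1.
Proof.
move=> q_prim; have := prim_root_sign q_prim.
rewrite /taft_coef qbinn mulr1 half_mulnS_bin2 -(prednK (prim_order_gt0 q_prim)) /=.
by rewrite exprS mulN1r mulNr => /oppr_inj.
Qed.

Definition taft_term (K : comNzRingType) (A : algType K) (q : K) (y : A) (i j : nat)
    (a : A) : A :=
  taft_coef q i j *: (y ^+ (j - i) * a * y ^+ i).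

Lemma taft_termSS (K : comNzRingType) (A : algType K) (q : K) (y a : A) i j :
  taft_term q y i.+1 j.+1 a =
  q ^+ i.+1 *: (y * taft_term q y i.+1 j a - taft_term q y i j a * y).
Proof.
rewrite /taft_term -taft_coefSS -scalerA.
case: (ltngtP i j) => [lt_ij | lt_ji | <-].
- rewrite subSS -(subnSK lt_ij) -scalerAr -scalerAl !mulrA -exprS.
  by rewrite -[_ * y ^+ i * y]mulrA -exprSr scalerBl.
- have lt_jSi : (j < i.+1)%N by apply: ltnW.
  rewrite (taft_coef_small q lt_ji) (taft_coef_small q lt_jSi) subrr !scale0r.
  by rewrite mulr0 mul0r subrr.
- rewrite (taft_coef_small q (ltnSn i)) !subnn !expr0 !mul1r !scale0r mulr0 !sub0r.
  by rewrite -scalerAl -mulrA -exprSr scaleNr.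
Qed.

Section TaftTerm.
Variables (K : comNzRingType) (A : algType K) (q : K) (y a : A).

Lemma taft_term0 j : taft_term q y 0 j a = y ^+ j * a.
Proof. by rewrite /taft_term taft_coef0 subn0 expr0 mulr1 scale1r. Qed.

Lemma taft_term_small i j : (j < i)%N -> taft_term q y i j a = 0.
Proof. by move=> lt_ji; rewrite /taft_term taft_coef_small ?scale0r. Qed.

End TaftTerm.

(* The representative of -m in [0, n): g^m = g^(n - negmod n m) in T_n(q). *)
Definition negmod (n m : nat) : nat := ((n - m %% n) %% n)%N.

Section NegMod.
Variable n : nat.
Hypothesis n_gt0 : (0 < n)%N.

Lemma negmod_lt m : (negmod n m < n)%N.
Proof. by rewrite ltn_mod. Qed.

Lemma negmod_addn_mod m : ((negmod n m + m) %% n = 0)%N.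
Proof.
by rewrite modnDml -modnDmr subnK ?modnn // ltnW // ltn_pmod.
Qed.

Lemma negmod_unique m k : (k < n)%N -> ((k + m) %% n = 0)%N -> negmod n m = k.
Proof.
move=> lt_kn km; rewrite -(modn_small lt_kn) -(modn_small (negmod_lt m)).
by apply/eqP; rewrite -(eqn_modDr m) km negmod_addn_mod.
Qed.

Lemma negmod_eq0 m : (negmod n m == 0)%N = (n %| m)%N.
Proof.
apply/eqP/idP => [nm0 | /eqP dvd_m]; last exact: negmod_unique.
by rewrite /dvdn -(negmod_addn_mod m) nm0.
Qed.

Lemma negmod_sub i : (i < n)%N -> negmod n (n - i) = i.
Proof. by move=> lt_in; apply: negmod_unique; rewrite // subnKC ?modnn // ltnW. Qed.

Lemma mod_negmod m : m = n - negmod n m %[mod n].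
Proof.
apply/eqP; rewrite -(eqn_modDl (negmod n m)) subnKC; last exact: ltnW (negmod_lt m).
by rewrite modnn negmod_addn_mod.
Qed.

Lemma negmodS m :
  negmod n m.+1 = if negmod n m == 0 then n.-1 else (negmod n m).-1.
Proof.
case: ifP => [/eqP nm0 | /negbT nm_neq0]; apply: negmod_unique.
- by rewrite ltn_predL.
- by rewrite addnS -addSn prednK // modnDl -(negmod_addn_mod m) nm0.
- exact: leq_ltn_trans (leq_pred _) (negmod_lt m).
- by rewrite addnS -addSn prednK ?negmod_addn_mod // lt0n.
Qed.

End NegMod.

Section TwistedDifference.
Variables (K : fieldType) (A : algType K) (n : nat) (q : K) (y : A).
Hypothesis n_gt0 : (0 < n)%N.

Definition qdiff (f : nat -> A) (m : nat) : A :=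
  q ^+ negmod n m *: (y * f m - f m.+1 * y).

(* The sequence m |-> g^m . a. *)
Definition gseq (a : A) (m : nat) : A := if (n %| m)%N then a else 0.

Lemma eq_qdiff f g m : f m = g m -> f m.+1 = g m.+1 -> qdiff f m = qdiff g m.
Proof. by rewrite /qdiff => -> ->. Qed.

Lemma eq_iter_qdiff f g k : f =1 g -> iter k qdiff f =1 iter k qdiff g.
Proof. by move=> fg; elim: k => //= k IHk m; apply: eq_qdiff. Qed.

Lemma qdiffZ c f m : qdiff (fun t => c *: f t) m = c *: qdiff f m.
Proof. by rewrite /qdiff -scalerAr -scalerAl -scalerBr scalerA mulrC -scalerA. Qed.

Lemma qdiff_sum I (r : seq I) (F : I -> nat -> A) m :
  qdiff (fun t => \sum_(i <- r) F i t) m = \sum_(i <- r) qdiff (F i) m.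
Proof. by rewrite /qdiff mulr_sumr mulr_suml -sumrB scaler_sumr. Qed.

Lemma qdiff_mul f g m :
  qdiff (fun t => f t * g t) m = qdiff f m * g m + f m.+1 * qdiff g m.
Proof.
by rewrite /qdiff -scalerAl -scalerAr -scalerDr mulrBl mulrBr !mulrA addrA subrK.
Qed.

Lemma qdiff_taft_term a j m : (j.+1 < n)%N ->
  qdiff (fun s => taft_term q y (negmod n s) j a) m = taft_term q y (negmod n m) j.+1 a.
Proof.
move=> lt_Sjn; rewrite /qdiff (negmodS n_gt0).
case: (negmod n m) => [|i] /=; last by rewrite taft_termSS.
have lt_j : (j < n.-1)%N by rewrite -ltnS prednK.
rewrite (taft_term_small q y a lt_j) !taft_term0.
by rewrite mul0r subr0 expr0 scale1r mulrA -exprS.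
Qed.

Lemma iter_qdiff_gseq a j m : (j < n)%N ->
  iter j qdiff (gseq a) m = taft_term q y (negmod n m) j a.
Proof.
elim: j m => [|j IHj] m lt_jn.
  rewrite /= /gseq -(negmod_eq0 n_gt0); case: (negmod n m) => [|i] /=.
    by rewrite taft_term0 mul1r.
  by rewrite taft_term_small.
rewrite iterS -qdiff_taft_term //.
by apply: eq_qdiff; apply: IHj; apply: ltnW.
Qed.

Hypothesis q_unity : q ^+ n = 1.

Lemma expr_negmod_mulK m : q ^+ negmod n m * q ^+ m = 1.
Proof. by rewrite -exprD -(expr_mod _ q_unity) negmod_addn_mod. Qed.

Lemma expr_negmodD m r : q ^+ negmod n m = q ^+ r * q ^+ negmod n (m + r).
Proof.
rewrite -[LHS]mulr1 -(expr_negmod_mulK (m + r)) exprD -[RHS]mul1r -(expr_negmod_mulK m).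
by move: (q ^+ negmod n m) (q ^+ negmod n (m + r)) (q ^+ m) (q ^+ r) => a b u v; ring.
Qed.

Lemma qdiff_shift f r m : qdiff (fun t => f (t + r)%N) m = q ^+ r *: qdiff f (m + r)%N.
Proof. by rewrite /qdiff scalerA -expr_negmodD addSn. Qed.

Lemma iter_qdiff_shift f r t m :
  iter t qdiff (fun s => f (s + r)%N) m = q ^+ (t * r) *: iter t qdiff f (m + r)%N.
Proof.
elim: t m => [|t IHt] m; first by rewrite mul0n expr0 scale1r.
rewrite iterS (@eq_qdiff _ (fun s => q ^+ (t * r) *: iter t qdiff f (s + r)%N)) ?IHt //.
by rewrite qdiffZ qdiff_shift scalerA -exprD mulSn addnC.
Qed.

Lemma iter_qdiff_mul f g j m :
  iter j qdiff (fun t => f t * g t) m =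
  \sum_(k < j.+1) qbin q j k *: (iter (j - k) qdiff f (m + k)%N * iter k qdiff g m).
Proof.
elim: j m => [|j IHj] m; first by rewrite big_ord1 scale1r addn0.
rewrite iterS (@eq_qdiff _ (fun s => \sum_(k < j.+1)
  qbin q j k *: (iter (j - k) qdiff f (s + k)%N * iter k qdiff g s)) m (IHj m) (IHj m.+1)).
rewrite qdiff_sum (qbin_sumS q j (fun k => iter (j.+1 - k) qdiff f (m + k)%N * iter k qdiff g m)).
rewrite -big_split /=; apply: eq_bigr => k _.
have le_kj : (k <= j)%N by rewrite -ltnS.
rewrite qdiffZ qdiff_mul (qdiff_shift (iter (j - k) qdiff f)) scalerDr -scalerAl scalerA.
by rewrite [qbin q j k * _]mulrC (subSn le_kj) subSS addSn addnS.
Qed.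

Hypothesis q_prim : n.-primitive_root q.

Lemma iter_qdiff_gseq_n a m :
  iter n qdiff (gseq a) m = if (n %| m)%N then y ^+ n * a - a * y ^+ n else 0.
Proof.
have lt_n1n : (n.-1 < n)%N by rewrite ltn_predL.
have -> : iter n qdiff (gseq a) m = qdiff (iter n.-1 qdiff (gseq a)) m by rewrite -iterS prednK.
rewrite (@eq_qdiff _ (fun s => taft_term q y (negmod n s) n.-1 a) m
  (iter_qdiff_gseq a m lt_n1n) (iter_qdiff_gseq a m.+1 lt_n1n)).
rewrite -(negmod_eq0 n_gt0 m) /qdiff (negmodS n_gt0).
case: (negmod n m) (negmod_lt n_gt0 m) => [|i] lt_in /=.
  rewrite taft_term0 /taft_term (taft_coef_top q_prim) subnn !expr0 !scale1r mul1r.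
  by rewrite mulrA -exprS -mulrA -exprSr prednK.
have qbin_n_eq0 : qbin q n i.+1 = 0 by apply: (qbin_prim_root_eq0 q_prim); rewrite lt_in.
by rewrite -taft_termSS (prednK n_gt0) /taft_term /taft_coef qbin_n_eq0 mulr0 scale0r.
Qed.

Lemma iter_qdiff_gseq_ge a N m :
  in_center (y ^+ n) -> (n <= N)%N -> iter N qdiff (gseq a) m = 0.
Proof.
move=> yn_central le_nN; rewrite -(subnK le_nN) iterD.
have vanish : iter n qdiff (gseq a) =1 (fun=> 0).
  by move=> s; rewrite iter_qdiff_gseq_n yn_central subrr if_same.
rewrite (eq_iter_qdiff _ vanish); elim: (N - n)%N m => // k IHk m.
by rewrite iterS (@eq_qdiff _ (fun=> 0)) // /qdiff mulr0 mul0r subrr scaler0.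
Qed.

End TwistedDifference.

Section TaftBasis.
Variables (K : nzRingType) (n : nat).

Lemma tb_eqmod m1 m2 j : m1 = m2 %[mod n] -> tb n m1 j = tb n m2 j :> taft K n.
Proof. by move=> eq_m; apply/matrixP => r c; rewrite !mxE eq_m. Qed.

Lemma tb_modnn j : tb n n j = tb n 0 j :> taft K n.
Proof. by apply: tb_eqmod; rewrite modnn mod0n. Qed.

Lemma tb_eq0 m j : (n <= j)%N -> tb n m j = 0 :> taft K n.
Proof.
move=> le_nj; apply/matrixP => r c; rewrite !mxE.
by rewrite [(c : nat) == j]eqn_leq [(j <= c)%N]leqNgt (leq_trans (ltn_ord c) le_nj) !andbF.
Qed.

Lemma taft_expand (h : taft K n) : h = \sum_(r < n) \sum_(c < n) h r c *: tb n r c.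
Proof.
rewrite {1}(matrix_sum_delta h); apply: eq_bigr => r _; apply: eq_bigr => c _.
by congr (_ *: _); apply/matrixP => r' c'; rewrite !mxE modn_small.
Qed.

Lemma sum_tb_coord (V : lmodType K) (F : nat -> nat -> V) m j : (j < n)%N ->
  \sum_(r < n) \sum_(c < n) tb n m j r c *: F r c = F (m %% n)%N j.
Proof.
move=> lt_jn; have lt_mn : (m %% n < n)%N by rewrite ltn_pmod // (leq_ltn_trans _ lt_jn).
rewrite (bigD1 (Ordinal lt_mn)) //= (bigD1 (Ordinal lt_jn)) //= !mxE !eqxx scale1r.
rewrite !big1 ?addr0 // => [r neq_r | c neq_c]; last first.
  by rewrite mxE -val_eqE /= in neq_c *; rewrite (negbTE neq_c) andbF scale0r.
apply: big1 => c _.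
by rewrite mxE -val_eqE /= in neq_r *; rewrite (negbTE neq_r) scale0r.
Qed.

End TaftBasis.

Section TaftStructure.
Variables (K : comNzRingType) (n : nat) (q : K).

Lemma sweedler_tb (V : lmodType K) (F : taft K n -> taft K n -> V) m j : (j < n)%N ->
  sweedler q F (tb n m j) =
  \sum_(k < j.+1) qbin q j k *: F (tb n (m + k) (j - k)) (tb n m k).
Proof.
move=> lt_jn; rewrite /sweedler (sum_tb_coord (fun r c =>
  \sum_(k < c.+1) qbin q c k *: F (tb n (r + k) (c - k)) (tb n r k))) //.
apply: eq_bigr => k _; rewrite (@tb_eqmod _ _ (m %% n + k)%N (m + k)) ?modnDml //.
by rewrite (@tb_eqmod _ _ (m %% n) m) ?modn_mod.
Qed.

Lemma sweedler_tb1 (V : lmodType K) (F : taft K n -> taft K n -> V) m : (1 < n)%N ->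
  sweedler q F (tb n m 1) = F (tb n m 1) (tb n m 0) + F (tb n m.+1 0) (tb n m 1).
Proof.
move=> n_gt1; rewrite sweedler_tb // !big_ord_recl big_ord0 addr0 /=.
by rewrite mulr0 addr0 !scale1r addn0 addn1.
Qed.

Lemma tmul_tb (h : taft K n) r t : (t < n)%N ->
  tmul q (tb n r t) h =
  \sum_(r' < n) \sum_(c' < n) (h r' c' * q ^+ (t * r')) *: tb n (r + r') (t + c').
Proof.
move=> lt_tn; rewrite /tmul.
transitivity (\sum_(r0 < n) \sum_(c0 < n) tb n r t r0 c0 *:
   \sum_(r' < n) \sum_(c' < n) (h r' c' * q ^+ (c0 * r')) *: tb n (r0 + r') (c0 + c')).
  apply: eq_bigr => r0 _; apply: eq_bigr => c0 _; rewrite scaler_sumr.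
  by apply: eq_bigr => r' _; rewrite scaler_sumr; apply: eq_bigr => c' _; rewrite scalerA !mulrA.
rewrite (sum_tb_coord (fun r0 c0 => \sum_(r' < n) \sum_(c' < n)
  (h r' c' * q ^+ (c0 * r')) *: tb n (r0 + r') (c0 + c'))) //.
by apply: eq_bigr => r' _; apply: eq_bigr => c' _; rewrite (@tb_eqmod _ _ _ (r + r')) ?modnDml.
Qed.

Lemma tmul_tb_tb r t r' c' : (t < n)%N -> (c' < n)%N ->
  tmul q (tb n r t) (tb n r' c') = q ^+ (t * (r' %% n)) *: tb n (r + r') (t + c').
Proof.
move=> lt_tn lt_cn; rewrite tmul_tb //.
under eq_bigr => r0 _ do under eq_bigr => c0 _ do rewrite -scalerA.
rewrite (sum_tb_coord (fun r0 c0 => q ^+ (t * r0) *: tb n (r + r0) (t + c0))) //.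
by rewrite (@tb_eqmod _ _ _ (r + r')) ?modnDmr.
Qed.

End TaftStructure.

Section LinearAxiom.
Variables (R : pzRingType) (U V : lmodType R) (f : U -> V).
Hypothesis f_lin : forall c u v, f (c *: u + v) = c *: f u + f v.
Let fL : {linear U -> V} := HB.pack f (GRing.isLinear.Build R U V *:%R f f_lin).

Lemma lin0 : f 0 = 0. Proof. exact: (linear0 fL). Qed.

Lemma linZ c u : f (c *: u) = c *: f u. Proof. exact: (linearZ_LR fL). Qed.

Lemma lin_sum I r (P : pred I) F :
  f (\sum_(i <- r | P i) F i) = \sum_(i <- r | P i) f (F i).
Proof. exact: (linear_sum fL). Qed.

End LinearAxiom.

Section TaftPartialAction.
Variables (K : fieldType) (n : nat) (q : K) (A : algType K) (act : taft K n -> A -> A).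
Hypotheses (n_gt1 : (1 < n)%N) (q_prim : n.-primitive_root q).
Hypothesis act_linl : forall c h1 h2 a, act (c *: h1 + h2) a = c *: act h1 a + act h2 a.
Hypothesis act_linr : forall h c a b, act h (c *: a + b) = c *: act h a + act h b.
Let n_gt0 : (0 < n)%N := ltnW n_gt1.
Let q_unity : q ^+ n = 1 := prim_expr_order q_prim.
Let act_linl_at a c h1 h2 : act (c *: h1 + h2) a = c *: act h1 a + act h2 a :=
  act_linl c h1 h2 a.

Local Notation y := (act (tb n 0 1) 1).
Local Notation D := (qdiff n q y).

Lemma act0l a : act 0 a = 0. Proof. exact: (@lin0 _ _ _ (act^~ a) (act_linl_at a)). Qed.

Lemma actZl c h a : act (c *: h) a = c *: act h a.
Proof. exact: (@linZ _ _ _ (act^~ a) (act_linl_at a)). Qed.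

Lemma act_suml I r (P : pred I) F a :
  act (\sum_(i <- r | P i) F i) a = \sum_(i <- r | P i) act (F i) a.
Proof. exact: (@lin_sum _ _ _ (act^~ a) (act_linl_at a)). Qed.

Lemma act0r h : act h 0 = 0. Proof. exact: (@lin0 _ _ _ (act h) (act_linr h)). Qed.

Lemma actZr h c a : act h (c *: a) = c *: act h a.
Proof. exact: (@linZ _ _ _ (act h) (act_linr h)). Qed.

Lemma act_sumr I r (P : pred I) F h :
  act h (\sum_(i <- r | P i) F i) = \sum_(i <- r | P i) act h (F i).
Proof. exact: (@lin_sum _ _ _ (act h) (act_linr h)). Qed.

Lemma act_expand h a : act h a = \sum_(r < n) \sum_(c < n) h r c *: act (tb n r c) a.
Proof.
rewrite {1}(taft_expand h) act_suml; apply: eq_bigr => r _.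
by rewrite act_suml; apply: eq_bigr => c _; rewrite actZl.
Qed.

Section Necessity.
Hypothesis act_g_1 : forall i, (1 <= i < n)%N -> act (tb n i 0) 1 = 0.
Hypothesis act_unit : forall a, act (tb n 0 0) a = a.
Hypothesis act_mul : forall h a b,
  act h (a * b) = sweedler q (fun h1 h2 => act h1 a * act h2 b) h.
Hypothesis act_comp : forall h k a,
  act h (act k a) = sweedler q (fun h1 h2 => act h1 1 * act (tmul q h2 k) a) h.

Lemma act_g m a : act (tb n m 0) a = gseq n a m.
Proof.
rewrite /gseq; case: ifP => [/eqP m0 | /negbT ndvd].
  by rewrite (@tb_eqmod _ _ m 0) ?act_unit // m0 mod0n.
have := act_mul (tb n m 0) a 1.
rewrite mulr1 sweedler_tb // big_ord1 addn0 subn0 scale1r => ->.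
rewrite (@tb_eqmod _ _ m (m %% n)) ?modn_mod // act_g_1 ?mulr0 //.
by rewrite lt0n ndvd ltn_pmod.
Qed.

Lemma act_ginvx_1 : act (tb n n.-1 1) 1 = - (q *: y).
Proof.
have := act_comp (tb n n.-1 1) (tb n 1 0) 1.
rewrite sweedler_tb1 // act_g /gseq dvdn1 gtn_eqF // act0r.
rewrite !tmul_tb_tb ?ltn_predL // !actZl modn_small // mul0n mul1n expr0 expr1.
rewrite addn1 prednK // !addn0 act_g /gseq dvdnn tb_modnn scale1r mulr1 mul1r.
by move/eqP; rewrite eq_sym addr_eq0 => /eqP.
Qed.

Lemma act_ginvx b : act (tb n n.-1 1) b = - (q *: (b * y)).
Proof.
have := act_mul (tb n n.-1 1) b 1; rewrite mulr1 sweedler_tb1 // => ->.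
have ndvd : (n %| n.-1)%N = false.
  by rewrite /dvdn modn_small ?ltn_predL // eqn0Ngt ltn_predRL n_gt1.
by rewrite !act_g /gseq ndvd prednK // dvdnn act_ginvx_1 mulr0 add0r mulrN scalerAr.
Qed.

Lemma act_tbS m j a : (j < n)%N ->
  act (tb n m j.+1) a = D (fun t => act (tb n t j) a) m.
Proof.
move=> lt_jn; have := act_comp (tb n n.-1 1) (tb n m.+1 j) a.
rewrite sweedler_tb1 // act_ginvx act_ginvx_1 !tmul_tb_tb ?ltn_predL // !actZl.
have tb_shift k : tb n (n.-1 + m.+1) k = tb n m k :> taft K n.
  by apply: tb_eqmod; rewrite addnS -addSn prednK // modnDl.
rewrite mul0n expr0 scale1r mul1n prednK // act_g /gseq dvdnn mul1r add0n add1n !tb_shift.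
rewrite (prim_expr_mod q_prim) => E.
rewrite /qdiff (expr_negmodD n_gt0 q_unity m 1) addn1 mulrC -scalerA -[LHS]scale1r.
rewrite -(expr_negmod_mulK n_gt0 q_unity m.+1) -scalerA; congr (_ *: _).
rewrite -[LHS](addKr (- (q *: y) * act (tb n m j) a)) -E.
by rewrite mulNr opprK -scalerAl expr1 scalerBr.
Qed.

Lemma act_tb_iter m j a : (j <= n)%N -> act (tb n m j) a = iter j D (gseq n a) m.
Proof.
elim: j m => [|j IHj] m le_jn; first exact: act_g.
rewrite act_tbS ?iterS; last exact: le_jn.
by apply: eq_qdiff; apply: IHj; apply: ltnW.
Qed.

Lemma partial_action_central : in_center (y ^+ n).
Proof.
move=> b; apply/eqP; rewrite -subr_eq0.
have := act_tb_iter 0 b (leqnn n).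
by rewrite (tb_eq0 K 0 (leqnn n)) act0l (iter_qdiff_gseq_n y n_gt0 q_prim) dvdn0 /= => <-.
Qed.

Lemma partial_action_formula m j a : (j < n)%N ->
  act (tb n m j) a = taft_term q y (negmod n m) j a.
Proof.
move=> lt_jn; rewrite act_tb_iter; last exact: ltnW.
exact: iter_qdiff_gseq.
Qed.

End Necessity.

Lemma act_iter_of_formula :
  in_center (y ^+ n) ->
  (forall a i j, (i < n)%N -> (j < n)%N -> act (tb n (n - i) j) a = taft_term q y i j a) ->
  forall m j a, act (tb n m j) a = iter j D (gseq n a) m.
Proof.
move=> central formula m j a; case: (ltnP j n) => [lt_jn | le_nj].
  rewrite (tb_eqmod K j (mod_negmod n_gt0 m)) formula ?negmod_lt //.
  by rewrite (iter_qdiff_gseq q y n_gt0).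
by rewrite (tb_eq0 K m le_nj) act0l (iter_qdiff_gseq_ge n_gt0 q_prim).
Qed.

Section Sufficiency.
Hypothesis act_iter : forall m j a, act (tb n m j) a = iter j D (gseq n a) m.

Lemma act_unit_of_iter a : act (tb n 0 0) a = a.
Proof. by rewrite act_iter /= /gseq dvdn0. Qed.

Lemma act_mul_of_iter h a b :
  act h (a * b) = sweedler q (fun h1 h2 => act h1 a * act h2 b) h.
Proof.
rewrite act_expand /sweedler; apply: eq_bigr => r _; apply: eq_bigr => c _.
have gseqM : gseq n (a * b) =1 (fun t => gseq n a t * gseq n b t).
  by move=> t; rewrite /gseq; case: ifP; rewrite ?mulr0.
rewrite act_iter (eq_iter_qdiff n q y _ gseqM) (iter_qdiff_mul y n_gt0 q_unity).
by congr (_ *: _); apply: eq_bigr => k _; rewrite -!act_iter.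
Qed.

Lemma act_act_tb r c r' c' a :
  act (tb n r c) (act (tb n r' c') a) =
  \sum_(t < c.+1) qbin q c t *:
     (act (tb n (r + t) (c - t)) 1 * (q ^+ (t * r') *: act (tb n (r + r') (t + c')) a)).
Proof.
have gseq_act : gseq n (act (tb n r' c') a) =1
    (fun m => gseq n 1 m * iter c' D (gseq n a) (m + r')%N).
  move=> m; rewrite /gseq; case: ifP => [/eqP dvd_m | _]; last by rewrite mul0r.
  by rewrite mul1r -act_iter (@tb_eqmod _ _ (m + r') r') // -modnDml dvd_m.
rewrite act_iter (eq_iter_qdiff n q y _ gseq_act).
rewrite (iter_qdiff_mul y n_gt0 q_unity (gseq n 1) (fun m => iter c' D (gseq n a) (m + r')%N)).
apply: eq_bigr => t _.
by rewrite (iter_qdiff_shift y n_gt0 q_unity) -iterD -!act_iter.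
Qed.

Lemma act_tmul_tb (h : taft K n) r t a : (t < n)%N ->
  act (tmul q (tb n r t) h) a =
  \sum_(r' < n) \sum_(c' < n) (h r' c' * q ^+ (t * r')) *: act (tb n (r + r') (t + c')) a.
Proof.
move=> lt_tn; rewrite tmul_tb // act_suml; apply: eq_bigr => r' _.
by rewrite act_suml; apply: eq_bigr => c' _; rewrite actZl.
Qed.

Lemma act_act_of_iter h k a :
  act h (act k a) = sweedler q (fun h1 h2 => act h1 1 * act (tmul q h2 k) a) h.
Proof.
rewrite act_expand /sweedler; apply: eq_bigr => r _; apply: eq_bigr => c _.
congr (_ *: _); transitivity (\sum_(r' < n) \sum_(c' < n) \sum_(t < c.+1)
    qbin q c t *: (act (tb n (r + t) (c - t)) 1 *
      ((k r' c' * q ^+ (t * r')) *: act (tb n (r + r') (t + c')) a))).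
  rewrite [act k a]act_expand act_sumr; apply: eq_bigr => r' _.
  rewrite act_sumr; apply: eq_bigr => c' _.
  rewrite actZr act_act_tb scaler_sumr; apply: eq_bigr => t _.
  by rewrite -!scalerAr !scalerA mulrA [k r' c' * _]mulrC.
have lt_tn (t : 'I_c.+1) : (t < n)%N := leq_trans (ltn_ord t) (ltn_ord c).
under [RHS]eq_bigr => t _ do rewrite (act_tmul_tb k r a (lt_tn t)) mulr_sumr scaler_sumr.
rewrite [RHS]exchange_big; apply: eq_bigr => r' _.
under [RHS]eq_bigr => t _ do rewrite mulr_sumr scaler_sumr.
by rewrite [RHS]exchange_big.
Qed.

Lemma partial_action_of_iter : is_partial_action q act.
Proof. by split; [exact: act_unit_of_iter | exact: act_mul_of_iter | exact: act_act_of_iter]. Qed.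

End Sufficiency.

End TaftPartialAction.

Theorem corollary3p11 (K : fieldType) (n : nat) (q : K) (A : algType K)
    (act : taft K n -> A -> A) :
  (2 <= n)%N ->
  n.-primitive_root q ->
  (* act is bilinear, i.e. a linear map T_n(q) (x) A -> A *)
  (forall (c : K) (h1 h2 : taft K n) (a : A),
      act (c *: h1 + h2) a = c *: act h1 a + act h2 a) ->
  (forall (h : taft K n) (c : K) (a b : A),
      act h (c *: a + b) = c *: act h a + act h b) ->
  act (tb n 0 0) 1 = 1 ->
  (forall i : nat, (1 <= i < n)%N -> act (tb n i 0) 1 = 0) ->
  (is_partial_action q act <->
   (in_center ((act (tb n 0 1) 1) ^+ n) /\
    forall (a : A) (i j : nat), (i < n)%N -> (j < n)%N ->
      act (tb n (n - i) j) a =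
        ((-1) ^+ i * q ^+ ((i * i.+1)./2) * qbin q j i) *:
          ((act (tb n 0 1) 1) ^+ (j - i) * a * (act (tb n 0 1) 1) ^+ i))).
Proof.
(* [1 . 1_A = 1_A] is implied by either side of the equivalence. *)
move=> n_gt1 q_prim linl linr _ act_g_1; split.
  case=> act_unit act_mul act_comp; split.
    exact: partial_action_central n_gt1 q_prim linl linr act_g_1 act_unit act_mul act_comp.
  move=> a i j lt_in lt_jn.
  rewrite (partial_action_formula n_gt1 q_prim linl linr act_g_1 act_unit act_mul act_comp) //.
  by rewrite (negmod_sub (ltnW n_gt1) lt_in).
case=> central formula; apply: (partial_action_of_iter n_gt1 q_prim linl linr).
exact: act_iter_of_formula n_gt1 q_prim linl central formula.
Qed.
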